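(* Let $n,s,g,l$ satisfy $s>1$ and $l\le sg$. Then every $n$-vertex graph satisfying $S(s,g)$ and $L(l)$ has diameter at most $2\ln n/\ln s+3$.
   Context: For a vertex set $A$ of a graph $G$, $N(A)$ is the set of vertices outside $A$ having at least one neighbor in $A$. $G$ satisfies $S(s,g)$ if every $A\subseteq V(G)$ with $|A|\le g$ has $|N(A)|\ge s|A|$. $G$ satisfies $L(l)$ if there is an edge between any two disjoint sets $A,B\subseteq V(G)$ with $|A|,|B|\ge l$. The diameter is the maximum over all pairs of vertices of the length of a shortest path between them. *)

From mathcomp Require Import all_boot.
From Stdlib Require Import Reals.
Set Implicit Arguments. Unset Strict Implicit. Unset Printing Implicit Defensive.

Definition simple_graph (T : finType) (e : rel T) : Prop :=
  symmetric e /\ irreflexive e.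

Definition nbhd (T : finType) (e : rel T) (A : {set T}) : {set T} :=
  [set v | (v \notin A) && [exists u in A, e u v]].

Definition propS (T : finType) (e : rel T) (s : R) (g : nat) : Prop :=
  forall A : {set T}, (#|A| <= g)%N ->
    (s * INR #|A| <= INR #|nbhd e A|)%R.

Definition propL (T : finType) (e : rel T) (l : nat) : Prop :=
  forall A B : {set T}, [disjoint A & B] -> (l <= #|A|)%N -> (l <= #|B|)%N ->
    exists u v, [/\ u \in A, v \in B & e u v].

(* dist(x,y) <= d : there is a walk x = v0, v1, ..., vk = y with k <= d. *)
Definition dist_le (T : finType) (e : rel T) (x y : T) (d : R) : Prop :=
  exists p : seq T, [/\ path e x p, last x p = y & (INR (size p) <= d)%R].

(* diameter <= d : every pair of vertices is at distance <= d
   (a disconnected graph has infinite diameter). *)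
Definition diameter_le (T : finType) (e : rel T) (d : R) : Prop :=
  forall x y : T, dist_le e x y d.

(* Balls grow fast: by S(s,g), the closed neighbourhood of a set of size at
   most g is (1+s) times larger, so the ball of radius k around any vertex has
   at least s^k vertices until it exceeds g vertices, after which it has at
   least s g >= l vertices.  Taking k with s^k > n (so k <= ln n / ln s + 1),
   the k-balls around any two vertices have at least l vertices each, so by
   L(l) they intersect or are joined by an edge; hence the distance is at most
   2k + 1 <= 2 ln n / ln s + 3. *)
From mathcomp Require Import all_boot.
From Stdlib Require Import Reals Lra.
From Stdlib Require ZArith.

Set Implicit Arguments.
Unset Strict Implicit.
Unset Printing Implicit Defensive.

Lemma set_sub_card (T : finType) (A : {set T}) n :
  (n <= #|A|)%N -> exists2 B : {set T}, B \subset A & #|B| = n.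
Proof.
case/card_geqP => s [uniq_s <- sA]; exists [set x in s].
  by apply/subsetP => x; rewrite inE; apply: sA.
by rewrite cardsE; apply/card_uniqP.
Qed.

Section Balls.
Variables (T : finType) (e : rel T).

Definition closed_nbhd (A : {set T}) : {set T} := A :|: nbhd e A.

Lemma card_closed_nbhd (A : {set T}) :
  #|closed_nbhd A| = (#|A| + #|nbhd e A|)%N.
Proof.
rewrite -cardsUI; suff -> : A :&: nbhd e A = set0 by rewrite cards0 addn0.
by apply/setP => y; rewrite !inE; case: (y \in A).
Qed.

Lemma closed_nbhdS (A B : {set T}) :
  A \subset B -> closed_nbhd A \subset closed_nbhd B.
Proof.
move=> sAB; apply/subsetP => y; rewrite !inE.
case/orP => [/(subsetP sAB) -> // | /andP [_ /existsP [u /andP [uA uy]]]].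
case: (y \in B) => //=; apply/existsP; exists u.
by rewrite (subsetP sAB _ uA).
Qed.

Definition ball (x : T) (k : nat) : {set T} := iter k closed_nbhd [set x].

Lemma ball0 x : ball x 0 = [set x]. Proof. by []. Qed.

Lemma ballS x k : ball x k.+1 = closed_nbhd (ball x k). Proof. by []. Qed.

Definition walk_le (x y : T) (k : nat) : Prop :=
  exists p : seq T, [/\ path e x p, last x p = y & (size p <= k)%N].

Lemma walk_le_cat x y z m n :
  walk_le x y m -> walk_le y z n -> walk_le x z (m + n).
Proof.
move=> [p [xp <- lep]] [q [yq <- leq]]; exists (p ++ q).
by rewrite cat_path last_cat xp yq size_cat leq_add.
Qed.

Lemma walk_le_sym x y k : symmetric e -> walk_le x y k -> walk_le y x k.
Proof.
move=> sym [p [xp <- lep]]; exists (rev (belast x p)); split.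
- by rewrite rev_path (eq_path (fun u v => sym v u)).
- by rewrite -(last_cons x) -rev_rcons -lastI rev_cons last_rcons.
- by rewrite size_rev size_belast.
Qed.

Lemma walk_le_ball x y k : y \in ball x k -> walk_le x y k.
Proof.
elim: k y => [|k IH] y; first by rewrite ball0 inE => /eqP ->; exists [::].
rewrite ballS; case/setUP => [/IH [p [xp py lep]] | ].
  by exists p; rewrite ltnW.
rewrite inE => /andP [_ /existsP [u /andP [/IH [p [xp pu lep]] uy]]].
by exists (rcons p y); rewrite rcons_path last_rcons size_rcons xp pu uy.
Qed.

Lemma walk_le_large_balls l x y k :
  symmetric e -> propL e l ->
  (l <= #|ball x k|)%N -> (l <= #|ball y k|)%N -> walk_le x y (k.+1 + k).
Proof.
move=> sym HL lx ly.
suff [w wx wy] : exists2 w, w \in ball x k.+1 & w \in ball y k.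
  exact: walk_le_cat (walk_le_ball wx) (walk_le_sym sym (walk_le_ball wy)).
have [disj | ] := boolP [disjoint ball x k & ball y k]; last first.
  rewrite -setI_eq0 => /set0Pn [w]; rewrite inE => /andP [wx wy].
  by exists w; rewrite // ballS inE wx.
have [u [v [ux vy uv]]] := HL _ _ disj lx ly.
exists v => //; rewrite ballS !inE; case: (v \in ball x k) => //=.
by apply/existsP; exists u; rewrite ux uv.
Qed.

End Balls.

Section Expansion.
Variables (T : finType) (e : rel T) (s : R) (g : nat).
Hypothesis (s_ge0 : (0 <= s)%R) (HS : propS e s g).

Lemma card_closed_nbhd_small (A : {set T}) : (#|A| <= g)%N ->
  ((1 + s) * INR #|A| <= INR #|closed_nbhd e A|)%R.
Proof. by move=> /HS; rewrite card_closed_nbhd plus_INR; lra. Qed.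

Lemma card_closed_nbhd_large (A : {set T}) : (g <= #|A|)%N ->
  (s * INR g <= INR #|closed_nbhd e A|)%R.
Proof.
move=> /set_sub_card [B sBA cardB].
have sub := le_INR _ _ (leP (subset_leq_card (closed_nbhdS e sBA))).
have := card_closed_nbhd_small (eq_leq cardB); rewrite cardB.
have := pos_INR g; lra.
Qed.

Lemma card_ball_ge x k :
  (s * INR g <= INR #|ball e x k| \/ s ^ k <= INR #|ball e x k|)%R.
Proof.
elim: k => [|k IH]; first by right; rewrite ball0 cards1 /=; lra.
rewrite ballS.
have [small | large] := leqP #|ball e x k| g; last first.
  by left; apply: card_closed_nbhd_large; apply: ltnW.
have grow := card_closed_nbhd_small small; have := pos_INR #|ball e x k|.
case: IH => IH; [left | right]; rewrite /= ?pow_1; nra.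
Qed.

End Expansion.

Lemma exists_pow_gt (s n : R) : (1 < s)%R -> (1 <= n)%R ->
  exists k : nat, (n < s ^ k)%R /\ (INR k <= ln n / ln s + 1)%R.
Proof.
move=> s1 n1.
have lns : (0 < ln s)%R by rewrite -ln_1; apply: ln_increasing; lra.
have lnn : (0 <= ln n)%R.
  by rewrite -ln_1; case: (Rle_lt_or_eq_dec _ _ n1) => [/ln_increasing|<-]; lra.
set r := (ln n / ln s)%R.
have r0 : (0 <= r)%R by apply: Rmult_le_pos; [|left; apply: Rinv_0_lt_compat].
have [up_gt up_le] := archimed r.
have k_up : INR (Z.to_nat (up r)) = IZR (up r).
  by rewrite INR_IZR_INZ Znat.Z2Nat.id //; apply: le_IZR; lra.
exists (Z.to_nat (up r)); split; last lra.
rewrite -Rpower_pow; last lra.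
rewrite /Rpower -{1}(exp_ln n); last lra.
apply: exp_increasing.
have -> : ln n = (r * ln s)%R by rewrite /r; field; lra.
by apply: Rmult_lt_compat_r; rewrite // k_up.
Qed.

Theorem mainTheorem3 (T : finType) (e : rel T) (s : R) (g l : nat) :
  simple_graph e -> (1 < s)%R -> (INR l <= s * INR g)%R ->
  propS e s g -> propL e l ->
  diameter_le e (2 * ln (INR #|T|) / ln s + 3)%R.
Proof.
move=> [sym _] s1 Hl HS HL x y.
have n1 : (1 <= INR #|T|)%R.
  by apply: (le_INR 1); apply/leP/card_gt0P; exists x.
have [k [n_lt_sk k_le]] := exists_pow_gt s1 n1.
have large_ball z : (l <= #|ball e z k|)%N.
  have := le_INR _ _ (leP (max_card (ball e z k))).
  have s_ge0 : (0 <= s)%R by lra.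
  case: (card_ball_ge s_ge0 HS z k) => [ball_large _ | ]; last lra.
  by apply/leP/INR_le; lra.
have [p [xp py size_p]] :=
  walk_le_large_balls sym HL (large_ball x) (large_ball y).
exists p; split => //.
apply: Rle_trans (le_INR _ _ (leP size_p)) _.
rewrite plus_INR S_INR /Rdiv Rmult_assoc -/(Rdiv _ _); lra.
Qed.
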